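(* Let $m\ge1$ and let $H_{2m}$ be as in the context with $\zeta=1$, i.e. $h(w,w')=1-4ww'$. Then for all $w_1,\ldots,w_{2m}$ at which the expression is defined, \[ H_{2m}(w_1,\ldots,w_{2m})=2^{m(m-1)} . \]
   Context: For a parameter $\zeta$, $h(w,w')=1-(3+\zeta^2)ww'+(1-\zeta^2)ww'(w+w')$ and \[ H_{2m}(w_1,\ldots,w_{2m})=\frac{\prod_{i=1}^m\prod_{j=m+1}^{2m}h(w_i,w_j)}{\prod_{1\le i<j\le m}(w_i-w_j)\prod_{m+1\le i<j\le 2m}(w_i-w_j)}\ \det_{1\le i\le m,\ m+1\le j\le 2m}\frac{1}{h(w_i,w_j)}. \] *)

From HB Require Import structures.
From mathcomp Require Import all_boot all_order all_algebra.
Set Implicit Arguments. Unset Strict Implicit. Unset Printing Implicit Defensive.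
Import Order.TTheory GRing.Theory Num.Theory.
Local Open Scope ring_scope.

Definition hzeta (R : ringType) (zeta w w' : R) : R :=
  1 - (3 + zeta ^+ 2) * w * w' + (1 - zeta ^+ 2) * w * w' * (w + w').

(* Variables w_1..w_{2m} are encoded as w : 'I_(m + m) -> R;
   w_i (1 <= i <= m) is w (lshift m (i-1)), w_{m+j} is w (rshift m (j-1)). *)
Definition H2m (R : fieldType) (zeta : R) (m : nat) (w : 'I_(m + m) -> R) : R :=
  (\prod_(i < m) \prod_(j < m) hzeta zeta (w (lshift m i)) (w (rshift m j)))
  / ((\prod_(i < m) \prod_(j < m | (i < j)%N) (w (lshift m i) - w (lshift m j)))
     * (\prod_(i < m) \prod_(j < m | (i < j)%N) (w (rshift m i) - w (rshift m j))))
  * \det (\matrix_(i < m, j < m) (hzeta zeta (w (lshift m i)) (w (rshift m j)))^-1).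

From HB Require Import structures.
From mathcomp Require Import all_boot all_order all_algebra.
From mathcomp Require Import ring zify.
Import Order.TTheory GRing.Theory Num.Theory.
Set Implicit Arguments. Unset Strict Implicit.
Local Open Scope ring_scope.

(* At zeta = 1 the kernel is h(w,w') = 1 - 4 w w', so the determinant in
   H_{2m} is a Cauchy-type determinant det (1 / (1 - d^2 x_i y_j)) with d = 2.
   Over any field, for values x, y with all kernel entries nonzero,
     det (1 / (1 - d^2 x_i y_j)) * prod_{i,j} (1 - d^2 x_i y_j)
       = d^(n(n-1)) * prod_{i<j} (x_i - x_j) * prod_{i<j} (y_i - y_j).
   We prove this by induction on n: a first-pivot Schur complement formula
   for determinants reduces det M to the pivot times the determinant of the
   Schur complement, and for a Cauchy matrix that complement is again a
   Cauchy matrix (on the remaining points) rescaled by two diagonal matrices.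
   The main theorem then follows by identifying H_{2m} at zeta = 1 with the
   Cauchy data of the two halves of w and cancelling the (nonzero)
   Vandermonde products. *)

Lemma det_schur_pivot (R : fieldType) n (M : 'M[R]_(1 + n)) : M 0 0 != 0 ->
  \det M = M 0 0 * \det (drsubmx M - (M 0 0)^-1 *: (dlsubmx M *m ursubmx M)).
Proof.
set a := M 0 0 => a_neq0.
have ul_scalar : ulsubmx M = a%:M.
  by apply/matrixP => i j; rewrite !ord1 !mxE /=; congr (M _ _); apply/val_inj.
pose L : 'M[R]_(1 + n) := block_mx 1%:M 0 (- a^-1 *: dlsubmx M) 1%:M.
have LM_ublock : L *m M = block_mx (ulsubmx M) (ursubmx M) 0
                   (drsubmx M - a^-1 *: (dlsubmx M *m ursubmx M)).
  rewrite /L -{2}(submxK M) mulmx_block !mul1mx !mul0mx !addr0 ?add0r.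
  congr block_mx; last by rewrite -scalemxAl scaleNr addrC.
  by rewrite ul_scalar -scalemxAl mul_mx_scalar scalerA mulNr mulVf // scaleN1r addNr.
have := congr1 determinant LM_ublock.
by rewrite det_mulmx det_lblock det_ublock !det1 !mul1r ul_scalar det_scalar1.
Qed.

Section CauchyDeterminant.
Variables (R : fieldType) (d : R).

Definition ckernel (a b : R) := 1 - d ^+ 2 * a * b.

Definition vdm n (x : 'I_n -> R) := \prod_(i < n) \prod_(j < n | (i < j)%N) (x i - x j).

Definition kprod n (x y : 'I_n -> R) := \prod_(i < n) \prod_(j < n) ckernel (x i) (y j).

Definition cauchy_mx n (x y : 'I_n -> R) : 'M[R]_n :=
  \matrix_(i, j) (ckernel (x i) (y j))^-1.

Lemma vdm_neq0 n (x : 'I_n -> R) :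
  (forall i j, i != j -> x i != x j) -> vdm x != 0.
Proof.
move=> x_inj; apply/prodf_neq0 => i _; apply/prodf_neq0 => j lt_ij.
by rewrite subr_eq0 x_inj // neq_ltn lt_ij.
Qed.

Lemma vdm_recl n (x : 'I_n.+1 -> R) :
  vdm x = \prod_(j < n) (x ord0 - x (lift ord0 j)) * vdm (x \o lift ord0).
Proof.
rewrite /vdm big_ord_recl; congr (_ * _).
  by rewrite big_mkcond big_ord_recl /= mul1r.
apply: eq_bigr => i _; rewrite big_mkcond big_ord_recl /= mul1r [RHS]big_mkcond.
by apply: eq_bigr => j _; rewrite /= /bump !add1n ltnS.
Qed.

Lemma kprod_recl n (x y : 'I_n.+1 -> R) :
  kprod x y = ckernel (x ord0) (y ord0)
    * (\prod_(j < n) ckernel (x ord0) (y (lift ord0 j)))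
    * (\prod_(i < n) ckernel (x (lift ord0 i)) (y ord0))
    * kprod (x \o lift ord0) (y \o lift ord0).
Proof.
rewrite /kprod big_ord_recl big_ord_recl -!mulrA; congr (_ * (_ * _)).
by rewrite -big_split; apply: eq_bigr => i _; rewrite big_ord_recl.
Qed.

(* The scalar identity behind the Cauchy determinant: eliminating with the
   pivot 1/h(x0,y0) turns the entry 1/h(xi,yj) into a rank-one rescaling. *)
Lemma ckernel_elim (x0 y0 xi yj : R) :
    ckernel xi y0 != 0 -> ckernel x0 yj != 0 -> ckernel xi yj != 0 ->
  (ckernel xi yj)^-1 - ckernel x0 y0 * ((ckernel xi y0)^-1 * (ckernel x0 yj)^-1)
  = d ^+ 2 * (x0 - xi) / ckernel xi y0 * (ckernel xi yj)^-1
    * ((y0 - yj) / ckernel x0 yj).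
Proof. by rewrite /ckernel => h1 h2 h3; field; rewrite h1 h2 h3. Qed.

Section Step.
Variables (n : nat) (x y : 'I_n.+1 -> R).
Hypothesis kernel_neq0 : forall i j, ckernel (x i) (y j) != 0.

Let x' := x \o lift ord0.
Let y' := y \o lift ord0.

Lemma cauchy_mx_schur (M : 'M[R]_(1 + n)) : M = cauchy_mx x y ->
  drsubmx M - (M 0 0)^-1 *: (dlsubmx M *m ursubmx M)
  = diag_mx (\row_i (d ^+ 2 * (x ord0 - x' i) / ckernel (x' i) (y ord0)))
    *m cauchy_mx x' y'
    *m diag_mx (\row_j ((y ord0 - y' j) / ckernel (x ord0) (y' j))).
Proof.
move=> ->; rewrite mul_diag_mx mul_mx_diag; apply/matrixP => i j.
rewrite !mxE big_ord1 !mxE invrK /= !rshift1.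
have -> : lshift n (0 : 'I_1) = ord0 by apply/val_inj.
by rewrite ckernel_elim.
Qed.

End Step.

Lemma det_cauchy_mx n (x y : 'I_n -> R) :
    (forall i j, ckernel (x i) (y j) != 0) ->
  \det (cauchy_mx x y) * kprod x y = d ^+ (n * (n - 1)) * (vdm x * vdm y).
Proof.
elim: n x y => [|n IH] x y kernel_neq0.
  by rewrite det_mx00 /kprod /vdm !big_ord0 !mulr1.
set x' := x \o lift ord0; set y' := y \o lift ord0.
have pivot_neq0 : cauchy_mx x y 0 0 != 0 by rewrite mxE invr_eq0.
rewrite (det_schur_pivot pivot_neq0) (cauchy_mx_schur kernel_neq0 (erefl _)).
rewrite !det_mulmx !det_diag kprod_recl !vdm_recl mxE.
have prod_row (F : 'I_n -> R) : \prod_i (\row_j F j) 0 i = \prod_i F i.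
  by apply: eq_bigr => i _; rewrite mxE.
rewrite !prod_row !prodf_div big_split /= prodr_const card_ord.
have col_neq0 : \prod_(i < n) ckernel (x' i) (y ord0) != 0.
  by apply/prodf_neq0 => i _; apply: kernel_neq0.
have row_neq0 : \prod_(j < n) ckernel (x ord0) (y' j) != 0.
  by apply/prodf_neq0 => j _; apply: kernel_neq0.
have := IH x' y' (fun i j => kernel_neq0 _ _).
set Vx := vdm x'; set Vy := vdm y' => IHxy.
have -> : (n.+1 * (n.+1 - 1) = 2 * n + n * (n - 1))%N by case: (n) => [|k]; nia.
set Ax := \prod_(j < n) (x ord0 - _); set Ay := \prod_(j < n) (y ord0 - _).
rewrite exprD exprM.
rewrite [RHS](_ : _ = d ^+ 2 ^+ n * Ax * Ay * (d ^+ (n * (n - 1)) * (Vx * Vy))).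
  by rewrite -IHxy; field; rewrite col_neq0 row_neq0 kernel_neq0.
by ring.
Qed.

End CauchyDeterminant.

Lemma hzeta1_ckernel (R : fieldType) (a b : R) : hzeta 1 a b = ckernel 2 a b.
Proof. by rewrite /hzeta /ckernel; ring. Qed.

Lemma H2m1_cauchy (R : fieldType) m (w : 'I_(m + m) -> R) :
  let x := w \o lshift m in let y := w \o @rshift m m in
  H2m 1 w = kprod 2 x y / (vdm x * vdm y) * \det (cauchy_mx 2 x y).
Proof.
rewrite /H2m /kprod /cauchy_mx; congr (_ * _ * _).
  by apply: eq_bigr => i _; apply: eq_bigr => j _; rewrite hzeta1_ckernel.
by congr (\det _); apply/matrixP => i j; rewrite !mxE hzeta1_ckernel.
Qed.

Theorem mainTheorem9 (R : numClosedFieldType) (m : nat) (hm : (0 < m)%N)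
    (w : 'I_(m + m) -> R)
    (hdistL : forall i j : 'I_m, i != j -> w (lshift m i) != w (lshift m j))
    (hdistR : forall i j : 'I_m, i != j -> w (rshift m i) != w (rshift m j))
    (hnz : forall i j : 'I_m, hzeta 1 (w (lshift m i)) (w (rshift m j)) != 0) :
  H2m 1 w = 2 ^+ (m * (m - 1)).
Proof.
rewrite H2m1_cauchy /=.
have kernel_neq0 i j : ckernel 2 (w (lshift m i)) (w (rshift m j)) != 0.
  by rewrite -hzeta1_ckernel.
have := det_cauchy_mx kernel_neq0.
have := vdm_neq0 hdistL; have := vdm_neq0 hdistR.
set K := kprod _ _ _; set D := \det _ => Vy_neq0 Vx_neq0 cauchy_formula.
rewrite mulrAC [K * D]mulrC cauchy_formula.
by field; rewrite Vx_neq0 Vy_neq0.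
Qed.
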